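(* Let $Y$ be a real Banach space and $X$ a closed linear subspace of $Y$, and let $q\colon Y^*\to X^*$ be the restriction map $q(y^* )=y^*|_X$. Put $\mathcal{HB}(S_{X^*}):=\{y^*\in Y^*:\ \|y^*\|=1,\ \|q(y^* )\|=1\}$. Then $X$ has property U in $Y$ if and only if the restriction $q|_{\mathcal{HB}(S_{X^*})}\colon \mathcal{HB}(S_{X^*})\to S_{X^*}$ (which is always onto) is one-to-one. Moreover, if this is the case, then $q|_{\mathcal{HB}(S_{X^*})}$ is a homeomorphism from $\mathcal{HB}(S_{X^*})$ onto $S_{X^*}$, both endowed with the relative weak$^*$ topologies.
   Context: A closed subspace $X$ of a Banach space $Y$ has property U in $Y$ if every $x^*\in X^*$ has a unique Hahn–Banach (norm-preserving) extension to $Y$, i.e. for every $x^*\in X^*$ there is exactly one $y^*\in Y^*$ with $y^*|_X=x^*$ and $\|y^*\|=\|x^*\|$. $S_Z$ denotes the unit sphere of a Banach space $Z$. *)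

From HB Require Import structures.
From mathcomp Require Import all_boot all_order all_algebra.
From mathcomp Require Import all_classical all_reals all_analysis.
Set Implicit Arguments. Unset Strict Implicit. Unset Printing Implicit Defensive.
Import Order.TTheory GRing.Theory Num.Theory.
Import numFieldNormedType.Exports.
Local Open Scope classical_set_scope.
Local Open Scope ring_scope.

Section Duality.
Variables (R : realType) (Y : normedModType R).

Definition is_linear_subspace (X : set Y) : Prop :=
  X 0 /\ (forall (a : R) (x y : Y), X x -> X y -> X (a *: x + y)).

Definition in_dualY (f : Y -> R) : Prop :=
  (forall (a : R) (x y : Y), f (a *: x + y) = a * f x + f y) /\ continuous f.

(* Elements of X^* : continuous linear functionals on X, represented
   canonically as functions Y -> R vanishing off X. *)
Definition in_dualX (X : set Y) (g : Y -> R) : Prop :=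
  [/\ (forall (a : R) (x y : Y), X x -> X y -> g (a *: x + y) = a * g x + g y),
      ({within X, continuous g})
    & (forall y, ~ X y -> g y = 0)].

(* dual norm of a functional on the subspace A (A = setT gives the norm of Y^* ) *)
Definition dnorm (A : set Y) (f : Y -> R) : R :=
  sup [set `|f x| | x in [set x | A x /\ `|x| <= 1]].

Definition restr (X : set Y) (f : Y -> R) : Y -> R :=
  fun y => if `[< X y >] then f y else 0.

Definition propU (X : set Y) : Prop :=
  forall g, in_dualX X g ->
    exists! f, [/\ in_dualY f, restr X f = g & dnorm setT f = dnorm X g].

Definition HBset (X : set Y) : set (Y -> R) :=
  [set f | [/\ in_dualY f, dnorm setT f = 1 & dnorm X (restr X f) = 1]].

Definition SXdual (X : set Y) : set (Y -> R) :=
  [set g | in_dualX X g /\ dnorm X g = 1].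

(* relative weak* continuity: continuity for the topology of pointwise
   convergence, relative to the subset A *)
Definition wstar_cont_on (A : set (Y -> R)) (F : (Y -> R) -> (Y -> R)) : Prop :=
  {within (A : set {ptws Y -> R}),
     continuous (F : {ptws Y -> R} -> {ptws Y -> R})}.

Definition wstar_homeo (A B : set (Y -> R)) (F : (Y -> R) -> (Y -> R)) : Prop :=
  [/\ set_bij A B F, wstar_cont_on A F &
      exists G : (Y -> R) -> (Y -> R),
        [/\ forall g, B g -> A (G g) /\ F (G g) = g,
            forall f, A f -> G (F f) = f
          & wstar_cont_on B G]].

End Duality.

From HB Require Import structures.
From mathcomp Require Import all_boot all_order all_algebra.
From mathcomp Require Import all_classical all_reals all_analysis.
From mathcomp Require Import ring lra.
Set Implicit Arguments. Unset Strict Implicit. Unset Printing Implicit Defensive.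
Import Order.TTheory GRing.Theory Num.Theory.
Import numFieldNormedType.Exports.
Local Open Scope classical_set_scope.
Local Open Scope ring_scope.

(* An f in HB has norm one, so f x - |y - x| <= f y <= f x + |y - x| for x in X.
   For y outside X, the one-step Hahn-Banach extension shows that every c with
   sup_x (f x - |y - x|) <= c <= inf_x (f x + |y - x|) is the value at y of a
   norm-one extension of the restriction of f to X.  Hence, if q is one-to-one
   on HB, f y is both that infimum and that supremum: it is determined, up to e,
   by the values of q f at two points of X, which gives the weak* continuity of
   the inverse of q.  Property U is the same injectivity statement for
   functionals of arbitrary norm, reduced to norm one by scaling. *)

Section LinearFunctionals.
Variables (R : realType) (Y : normedModType R).

Definition linear_functional (f : Y -> R) : Prop :=
  forall (k : R) x y, f (k *: x + y) = k * f x + f y.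

Variable f : Y -> R.
Hypothesis lf : linear_functional f.

Lemma linear_functional0 : f 0 = 0.
Proof. by have := lf 1 0 0; rewrite scale1r addr0 mul1r => h; lra. Qed.

Lemma linear_functionalZ k x : f (k *: x) = k * f x.
Proof. by have := lf k x 0; rewrite addr0 linear_functional0 addr0. Qed.

Lemma linear_functionalB x y : f (x - y) = f x - f y.
Proof. by have := lf (-1) y x; rewrite scaleN1r mulN1r addrC => ->; rewrite addrC. Qed.

Lemma linear_functionalN x : f (- x) = - f x.
Proof. by rewrite -sub0r linear_functionalB linear_functional0 sub0r. Qed.

Lemma bounded_linear_continuous C : (forall x, `|f x| <= C * `|x|) -> continuous f.
Proof.
move=> fC x; apply/cvgrPdist_lt => e e0.
have C1 : 0 < `|C| + 1 by rewrite ltr_wpDl.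
have eC : 0 < e / (`|C| + 1) by rewrite divr_gt0.
have : \forall z \near x, `|x - z| < e / (`|C| + 1) by exact: cvgr_dist_lt.
apply: filterS => z; rewrite ltr_pdivlMr // -linear_functionalB => xz.
apply: le_lt_trans (fC _) _; apply: le_lt_trans (_ : `|C| * `|x - z| < e).
  by apply: ler_wpM2r => //; exact: ler_norm.
by apply: le_lt_trans xz; rewrite mulrDr mulr1 mulrC lerDl.
Qed.

End LinearFunctionals.

Section DualNorm.
Variables (R : realType) (Y : normedModType R) (A : set Y).

Lemma bounded_of_small_ball (f : Y -> R) d :
  (forall k x, A x -> A (k *: x)) -> (forall k x, A x -> f (k *: x) = k * f x) ->
  0 < d -> (forall z, A z -> `|z| < d -> `|f z| < 1) ->
  forall x, A x -> `|f x| <= (2 / d) * `|x|.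
Proof.
move=> homA homf d0 small x Ax.
have [->|x0] := eqVneq x 0.
  by have := homf 0 _ Ax; rewrite !scale0r mul0r => ->; rewrite !normr0 mulr0.
have nx : 0 < `|x| by rewrite normr_gt0.
pose k := d / (2 * `|x|); have k0 : 0 < k by rewrite divr_gt0 // mulr_gt0.
have kx : `|k *: x| < d.
  rewrite normrZ (gtr0_norm k0) /k.
  have -> : d / (2 * `|x|) * `|x| = d / 2 by field; rewrite gt_eqF.
  lra.
have := small _ (homA k _ Ax) kx; rewrite homf // normrM (gtr0_norm k0) => fkx.
rewrite -(ler_pM2l k0); have -> : k * (2 / d * `|x|) = 1.
  by rewrite /k; field; rewrite !gt_eqF.
exact: ltW.
Qed.

Lemma dnorm_le (f : Y -> R) D : A 0 ->
  (forall x, A x -> `|x| <= 1 -> `|f x| <= D) -> dnorm A f <= D.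
Proof.
move=> A0 fD; apply: ge_sup; first by exists `|f 0|, 0 => //; split => //; rewrite normr0.
by move=> _ [x [Ax x1] <-]; exact: fD.
Qed.

Lemma le_dnorm (f : Y -> R) C x : (forall x, A x -> `|f x| <= C * `|x|) ->
  A x -> `|x| <= 1 -> `|f x| <= dnorm A f.
Proof.
move=> fC.
have fCball z : A z -> `|z| <= 1 -> `|f z| <= `|C|.
  move=> Az z1; apply: le_trans (fC _ Az) _.
  apply: le_trans (_ : `|C| * `|z| <= _); first by apply: ler_wpM2r => //; exact: ler_norm.
  by rewrite -[leRHS]mulr1 ler_wpM2l.
move=> Ax x1; apply: sup_upper_bound; last by exists x.
split; first by exists `|f x|, x.
by exists `|C| => _ [z [Az z1] <-]; exact: fCball.
Qed.

Lemma dnorm_ge0 (f : Y -> R) C : (forall x, A x -> `|f x| <= C * `|x|) ->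
  A 0 -> 0 <= dnorm A f.
Proof. by move=> fC A0; have := le_dnorm fC A0; rewrite normr0 => /(_ ler01); exact: le_trans. Qed.

Lemma le_dnormM (f : Y -> R) C : (forall x, A x -> `|f x| <= C * `|x|) ->
  (forall k x, A x -> A (k *: x)) -> (forall k x, A x -> f (k *: x) = k * f x) ->
  forall x, A x -> `|f x| <= dnorm A f * `|x|.
Proof.
move=> fC homA homf x Ax; have [->|x0] := eqVneq x 0.
  by have := homf 0 _ Ax; rewrite !scale0r mul0r => ->; rewrite !normr0 mulr0.
have nx : 0 < `|x| by rewrite normr_gt0.
have := le_dnorm fC (homA (`|x|^-1) _ Ax).
rewrite normrZ homf // normrM ger0_norm ?invr_ge0 ?(ltW nx) // mulVf ?gt_eqF //.
by move=> /(_ (lexx _)); rewrite -ler_pdivrMr // mulrC.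
Qed.

Lemma dnormZ (f : Y -> R) C k : (forall x, A x -> `|f x| <= C * `|x|) ->
  A 0 -> 0 < k -> dnorm A (fun y => k * f y) = k * dnorm A f.
Proof.
move=> fC A0 k0; apply/eqP; rewrite eq_le; apply/andP; split.
  apply: dnorm_le => // x Ax x1; rewrite normrM gtr0_norm // ler_pM2l //.
  exact: le_dnorm fC _ _.
rewrite -ler_pdivlMl //; apply: dnorm_le => // x Ax x1.
rewrite ler_pdivlMl // -[k in k * _](gtr0_norm k0) -normrM.
apply: (@le_dnorm _ (k * C)) => // z Az.
by rewrite normrM gtr0_norm // -mulrA ler_pM2l //; exact: fC.
Qed.

End DualNorm.

Section HahnBanach.
Variables (R : realType) (Y : normedModType R).

(* Partial linear functionals dominated by the norm, encoded by their graphs so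
   that Zorn's lemma can be applied to sets of pairs. *)
Definition dominated_graph (G : set (Y * R)) : Prop :=
  [/\ G (0, 0), (forall x a b, G (x, a) -> G (x, b) -> a = b),
      (forall (k : R) x y a b, G (x, a) -> G (y, b) -> G (k *: x + y, k * a + b))
    & (forall x a, G (x, a) -> a <= `|x|)].

Definition graph_extend (G : set (Y * R)) (y : Y) (c : R) : set (Y * R) :=
  [set p | exists x a t, G (x, a) /\ p = (x + t *: y, a + t * c)].

Lemma dominated_graphZ G k x a : dominated_graph G -> G (x, a) -> G (k *: x, k * a).
Proof. by case=> G0 _ GD _ Gxa; have := GD k x 0 a 0 Gxa G0; rewrite !addr0. Qed.

Lemma sub_graph_extend G y c : G `<=` graph_extend G y c.
Proof. by case=> x a Gxa; exists x, a, 0; rewrite scale0r mul0r !addr0. Qed.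

Lemma graph_extend_at G y c : G (0, 0) -> graph_extend G y c (y, c).
Proof. by exists 0, 0, 1; rewrite add0r scale1r mul1r add0r. Qed.

Lemma graph_extend_functional G y c : dominated_graph G -> ~ (exists a, G (y, a)) ->
  forall x a b, graph_extend G y c (x, a) -> graph_extend G y c (x, b) -> a = b.
Proof.
move=> DG Gy x a b [x1 [a1 [t1 [G1 [-> ->]]]]] [x2 [a2 [t2 [G2 []]]]] E1 ->.
have [_ Gfun GD _] := DG.
have [t12|t12] := eqVneq t1 t2.
  by subst t2; move: G2; rewrite -(addIr _ E1) => G2; rewrite (Gfun _ _ _ G1 G2).
case: Gy; exists ((t1 - t2)^-1 * (- a1 + a2)).
have -> : y = (t1 - t2)^-1 *: (- x1 + x2).
  have -> : x2 = x1 + t1 *: y - t2 *: y by rewrite E1 addrK.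
  by rewrite addrA addKr -scalerBl scalerA mulVf ?scale1r // subr_eq0.
apply: dominated_graphZ => //.
by have := GD (-1) _ _ _ _ G1 G2; rewrite scaleN1r mulN1r.
Qed.

Lemma dominated_graph_extend G y c : dominated_graph G -> ~ (exists a, G (y, a)) ->
  (forall x a, G (x, a) -> a + c <= `|x + y|) ->
  (forall x a, G (x, a) -> a - c <= `|x - y|) ->
  dominated_graph (graph_extend G y c).
Proof.
move=> DG Gy Gplus Gminus; have [G0 _ GD Gdom] := DG.
split; first exact: sub_graph_extend.
- exact: graph_extend_functional.
- move=> k _ _ _ _ [x1 [a1 [t1 [G1 [-> ->]]]]] [x2 [a2 [t2 [G2 [-> ->]]]]].
  exists (k *: x1 + x2), (k * a1 + a2), (k * t1 + t2); split; first exact: GD.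
  congr pair; last by ring.
  by rewrite scalerDr scalerA scalerDl addrACA.
- move=> _ _ [x [a [t [Gxa [-> ->]]]]].
  have [t0|t0|->] := ltgtP t 0; last by rewrite scale0r mul0r !addr0; exact: Gdom.
  + have s0 : 0 < - t by rewrite oppr_gt0.
    have := Gminus _ _ (dominated_graphZ (- t)^-1 DG Gxa).
    have -> : (- t)^-1 *: x - y = (- t)^-1 *: (x + t *: y).
      by rewrite scalerDr scalerA invrN mulNr mulVf ?lt_eqF // scaleN1r.
    rewrite normrZ gtr0_norm ?invr_gt0 // => /(ler_wpM2l (ltW s0)).
    by rewrite mulrBr !mulrA mulfV ?gt_eqF // !mul1r mulNr opprK.
  + have := Gplus _ _ (dominated_graphZ t^-1 DG Gxa).
    have -> : t^-1 *: x + y = t^-1 *: (x + t *: y).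
      by rewrite scalerDr scalerA mulVf ?gt_eqF // scale1r.
    rewrite normrZ gtr0_norm ?invr_gt0 // => /(ler_wpM2l (ltW t0)).
    by rewrite mulrDr !mulrA mulfV ?gt_eqF // !mul1r.
Qed.

Lemma dominated_graph_extendable G y : dominated_graph G -> ~ (exists a, G (y, a)) ->
  exists c, dominated_graph (graph_extend G y c).
Proof.
move=> DG Gy; have [_ _ GD Gdom] := DG.
pose L := [set r | exists x a, G (x, a) /\ r = a - `|x - y|].
have ubL x2 a2 : G (x2, a2) -> ubound L (`|x2 + y| - a2).
  move=> G2 _ [x1 [a1 [G1 ->]]].
  have := Gdom _ _ (GD 1 _ _ _ _ G1 G2); rewrite scale1r mul1r.
  have : `|x1 + x2| <= `|x1 - y| + `|x2 + y|.
    have -> : x1 + x2 = (x1 - y) + (x2 + y) by rewrite addrACA addNr addr0.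
    exact: ler_normD.
  lra.
have [G0 _ _ _] := DG.
have supL : has_sup L.
  by split; [exists (0 - `|0 - y|), 0, 0 | exists (`|0 + y| - 0); exact: ubL].
exists (sup L); apply: dominated_graph_extend => // x a Gxa.
- by have := ge_sup supL.1 (ubL _ _ Gxa); lra.
- have : a - `|x - y| <= sup L by apply: sup_upper_bound => //; exists x, a.
  lra.
Qed.

Lemma dominated_graph_local U : U (0, 0) ->
  (forall p q, U p -> U q -> exists2 H, dominated_graph H & [/\ H `<=` U, H p & H q]) ->
  dominated_graph U.
Proof.
move=> U0 local; split => //.
- by move=> x a b Ua Ub; have [H [_ Hfun _ _] [_ Ha Hb]] := local _ _ Ua Ub; exact: Hfun Ha Hb.
- move=> k x y a b Ua Ub; have [H [_ _ HD _] [HU Ha Hb]] := local _ _ Ua Ub.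
  exact/HU/HD.
- by move=> x a Ua; have [H [_ _ _ Hdom] [_ Ha _]] := local _ _ Ua Ua; exact: Hdom.
Qed.

Lemma dominated_graph_chain G0 (F : set (set (Y * R))) : dominated_graph G0 ->
  (forall G, F G -> dominated_graph (G `|` G0)) -> total_on F subset ->
  dominated_graph (\bigcup_(G in F) G `|` G0).
Proof.
move=> DG0 DF Ftot; have [G00 _ _ _] := DG0.
apply: dominated_graph_local; first by right.
have sub G : F G -> G `|` G0 `<=` \bigcup_(G in F) G `|` G0.
  by move=> FG p [Gp|G0p]; [left; exists G|right].
move=> p q [[G1 FG1 G1p]|G0p] [[G2 FG2 G2q]|G0q].
- have [G12|G21] := Ftot _ _ FG1 FG2.
  + by exists (G2 `|` G0); [exact: DF|split; [exact: sub|left; exact: G12|left]].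
  + by exists (G1 `|` G0); [exact: DF|split; [exact: sub|left|left; exact: G21]].
- by exists (G1 `|` G0); [exact: DF|split; [exact: sub|left|right]].
- by exists (G2 `|` G0); [exact: DF|split; [exact: sub|right|left]].
- by exists G0 => //; split => // z; right.
Qed.

Lemma hahn_banach G0 : dominated_graph G0 -> exists f : Y -> R,
  [/\ linear_functional f, (forall x, `|f x| <= `|x|) & forall x a, G0 (x, a) -> f x = a].
Proof.
move=> DG0.
(* Zorn's lemma is applied to the sets [G] with [G `|` G0] dominated,
   so that the empty chain is harmless. *)
have [A [DA Amax]] : exists A, dominated_graph (A `|` G0) /\
    forall B, A `<` B -> ~ dominated_graph (B `|` G0).
  by apply: Zorn_bigcup => F; exact: dominated_graph_chain.
have [_ Afun AD Adom] := DA.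
have total y : exists a, (A `|` G0) (y, a).
  apply: contrapT => Ay; have [c DAc] := dominated_graph_extendable DA Ay.
  have AB := @sub_graph_extend (A `|` G0) y c.
  have DB : dominated_graph (graph_extend (A `|` G0) y c `|` G0).
    by rewrite setUidl // => p ?; apply: AB; right.
  apply: Amax DB; split; first by move=> p Ap; apply: AB; left.
  by move=> BA; apply: Ay; exists c; left; apply: BA; apply: graph_extend_at; case: DA.
have [f Af] := choice total; exists f; split.
- by move=> k x y; apply: (Afun (k *: x + y)); [exact: Af|exact: AD].
- move=> x; rewrite ler_norml Adom ?andbT //.
  by have := Adom _ _ (dominated_graphZ (-1) DA (Af x)); rewrite scaleN1r normrN; lra.
- by move=> x a G0xa; apply: Afun (Af x) _; right.
Qed.

End HahnBanach.

Section RestrictionToSubspace.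
Variables (R : realType) (Y : normedModType R) (X : set Y).
Hypothesis HX : is_linear_subspace X.

Lemma subspace0 : X 0. Proof. by case: HX. Qed.

Lemma subspaceD k x y : X x -> X y -> X (k *: x + y). Proof. by case: HX => _; apply. Qed.

Lemma subspaceZ k x : X x -> X (k *: x).
Proof. by move=> Xx; have := subspaceD k Xx subspace0; rewrite addr0. Qed.

Lemma restr_in (f : Y -> R) x : X x -> restr X f x = f x.
Proof. by move=> Xx; rewrite /restr asboolT. Qed.

Lemma restr_out (f : Y -> R) x : ~ X x -> restr X f x = 0.
Proof. by move=> Xx; rewrite /restr asboolF. Qed.

Lemma restrZ (f : Y -> R) k : restr X (fun y => k * f y) = (fun y => k * restr X f y).
Proof. by apply/funext => y; rewrite /restr; case: ifP; rewrite ?mulr0. Qed.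

Definition linear_on (g : Y -> R) : Prop :=
  forall (a : R) x y, X x -> X y -> g (a *: x + y) = a * g x + g y.

Lemma linear_onZ (g : Y -> R) : linear_on g -> forall k x, X x -> g (k *: x) = k * g x.
Proof.
move=> lg k x Xx.
have g0 : g 0 = 0 by have := lg 1 0 0 subspace0 subspace0; rewrite scale1r addr0 mul1r; lra.
by have := lg k x 0 Xx subspace0; rewrite !addr0 g0 addr0.
Qed.

Lemma dualY_bounded (f : Y -> R) : in_dualY f -> exists C, forall x, `|f x| <= C * `|x|.
Proof.
case=> lf cf; have [d /= d0 fd] := nbhs_norm0P.1 ((cvgrPdist_lt _ _).1 (cf 0) 1 ltr01).
exists (2 / d) => x; apply: (@bounded_of_small_ball _ _ setT) => // [k z _|z _ zd].
  exact: linear_functionalZ.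
by have := fd z zd; rewrite /= (linear_functional0 lf) sub0r normrN.
Qed.

Lemma dualX_bounded (g : Y -> R) : in_dualX X g -> exists C, forall x, X x -> `|g x| <= C * `|x|.
Proof.
move=> dg; have [lg cg _] := dg; have g0 : g 0 = 0.
  by have := linear_onZ lg 0 subspace0; rewrite scale0r mul0r.
have := (subspace_continuousP _ _).1 cg 0 subspace0.
move=> /(cvgrPdist_lt _ _)/(_ 1 ltr01)/nbhs_norm0P[d /= d0 gd].
exists (2 / d); apply: bounded_of_small_ball => //.
- by move=> k z; exact: subspaceZ.
- exact: linear_onZ lg.
by move=> z Xz zd; have := gd z zd Xz; rewrite /from_subspace /= g0 sub0r normrN.
Qed.

Lemma dualY_le_dnorm (f : Y -> R) : in_dualY f -> forall x, `|f x| <= dnorm setT f * `|x|.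
Proof.
move=> df x; have [C fC] := dualY_bounded df.
by apply: (@le_dnormM _ _ _ _ C) => // k z _; exact: linear_functionalZ df.1 _ _.
Qed.

Lemma dualX_le_dnorm (g : Y -> R) : in_dualX X g -> forall x, X x -> `|g x| <= dnorm X g * `|x|.
Proof.
move=> dg; have [C gC] := dualX_bounded dg; have [lg _ _] := dg.
apply: le_dnormM gC _ (linear_onZ lg) => k z; exact: subspaceZ.
Qed.

Lemma dnorm_restr_le (f : Y -> R) : in_dualY f -> dnorm X (restr X f) <= dnorm setT f.
Proof.
move=> df; have [C fC] := dualY_bounded df.
apply: dnorm_le subspace0 _ => x Xx x1; rewrite restr_in //.
apply: le_trans (dualY_le_dnorm df x) _; rewrite -[leRHS]mulr1 ler_wpM2l //.
exact: (@dnorm_ge0 _ _ _ _ C).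
Qed.

Definition graph_on (g : Y -> R) : set (Y * R) := [set p | X p.1 /\ p.2 = g p.1].

Lemma dominated_graph_on g : linear_on g -> (forall x, X x -> `|g x| <= `|x|) ->
  dominated_graph (graph_on g).
Proof.
move=> lg gx; split.
- by split; [exact: subspace0|rewrite -(scale0r 0) linear_onZ ?mul0r //; exact: subspace0].
- by move=> x a b [_ /= ->] [_ /= ->].
- by move=> k x y a b [Xx /= ->] [Xy /= ->]; split; [exact: subspaceD|rewrite /= lg].
- by move=> x a [Xx /= ->]; apply: le_trans (gx _ Xx); exact: ler_norm.
Qed.

Lemma norm_one_extension g : linear_on g -> (forall x, X x -> `|g x| <= `|x|) ->
  exists f, [/\ linear_functional f, forall x, `|f x| <= `|x| & forall x, X x -> f x = g x].
Proof.
move=> lg gx; have [f [lf fx fg]] := hahn_banach (dominated_graph_on lg gx).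
by exists f; split => // x Xx; apply: fg.
Qed.

Lemma norm_one_extension_at g y c : linear_on g -> (forall x, X x -> `|g x| <= `|x|) ->
  ~ X y -> (forall x, X x -> g x - `|y - x| <= c <= g x + `|y - x|) ->
  exists f, [/\ linear_functional f, forall x, `|f x| <= `|x|,
                forall x, X x -> f x = g x & f y = c].
Proof.
move=> lg gx Xy gc; have Dg := dominated_graph_on lg gx.
have [f [lf fx fg]] : exists f, [/\ linear_functional f, forall x, `|f x| <= `|x|
    & forall x a, graph_extend (graph_on g) y c (x, a) -> f x = a].
  apply/hahn_banach/dominated_graph_extend => // [[a [/= Ya _]]|x a [Xx /= ->]|x a [Xx /= ->]].
  - exact: Xy.
  - have /andP[_] := gc _ (subspaceZ (-1) Xx).
    by rewrite /= linear_onZ // mulN1r scaleN1r opprK [y + x]addrC; lra.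
  - by have /andP[+ _] := gc _ Xx; rewrite distrC; lra.
exists f; split => //; last by apply: fg; apply: graph_extend_at; case: Dg.
by move=> x Xx; apply: fg; apply: sub_graph_extend.
Qed.

Lemma bounded_extension g r : linear_on g -> 0 <= r ->
  (forall x, X x -> `|g x| <= r * `|x|) ->
  exists f, [/\ linear_functional f, forall x, `|f x| <= r * `|x|
                & forall x, X x -> f x = g x].
Proof.
move=> lg r0 gr.
have gr0 x : r = 0 -> X x -> g x = 0.
  by move=> r_eq0 Xx; apply/eqP; rewrite -normr_le0; have := gr _ Xx; rewrite r_eq0 mul0r.
have [h [lh hx hg]] : exists h, [/\ linear_functional h, forall x, `|h x| <= `|x|
    & forall x, X x -> h x = r^-1 * g x].
  apply: norm_one_extension => [a x y Xx Xy|x Xx]; first by rewrite lg // mulrDr mulrCA.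
  have [r_eq0|rn0] := eqVneq r 0; first by rewrite r_eq0 invr0 mul0r normr0.
  have r_gt0 : 0 < r by rewrite lt_def rn0.
  by rewrite normrM gtr0_norm ?invr_gt0 // mulrC ler_pdivrMr // mulrC gr.
exists (fun x => r * h x); split.
- by move=> k x y; rewrite lh mulrDr mulrCA.
- by move=> x; rewrite normrM ger0_norm // ler_wpM2l.
- move=> x Xx; rewrite hg //; have [r_eq0|rn0] := eqVneq r 0; last by rewrite mulVKf.
  by rewrite r_eq0 mul0r gr0.
Qed.

Lemma HBset_of_norm_one f : linear_functional f -> (forall x, `|f x| <= `|x|) ->
  dnorm X (restr X f) = 1 -> HBset X f.
Proof.
move=> lf fx fX1; have df : in_dualY f.
  by split => //; apply: (@bounded_linear_continuous _ _ _ lf 1) => x; rewrite mul1r.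
split => //; apply/eqP; rewrite eq_le; apply/andP; split.
  by apply: dnorm_le => // x _ x1; exact: le_trans (fx x) x1.
by rewrite -[leLHS]fX1 dnorm_restr_le.
Qed.

Lemma restr_dualX f : in_dualY f -> in_dualX X (restr X f).
Proof.
case=> lf cf; split.
- by move=> a x y Xx Xy; rewrite !restr_in //; exact: subspaceD.
- apply: (@subspace_eq_continuous _ _ _ f); last exact: continuous_subspaceT.
  by move=> x; rewrite inE => Xx; rewrite /from_subspace /= restr_in.
- by move=> y; exact: restr_out.
Qed.

Lemma restr_extension f g : in_dualX X g -> (forall x, X x -> f x = g x) -> restr X f = g.
Proof.
case=> _ _ g_out fg; apply/funext => y.
by have [Xy|Xy] := pselect (X y); [rewrite restr_in ?fg|rewrite restr_out ?g_out].
Qed.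

Lemma HBset_le_norm f : HBset X f -> forall x, `|f x| <= `|x|.
Proof. by case=> df f1 _ x; rewrite -[leRHS]mul1r -f1 dualY_le_dnorm. Qed.

Lemma HBset_restr f : HBset X f -> SXdual X (restr X f).
Proof. by case=> df _ f1; split => //; exact: restr_dualX. Qed.

Lemma SXdual_restr_HBset g : SXdual X g -> exists2 f, HBset X f & restr X f = g.
Proof.
case=> dg g1; have [lg _ _] := dg.
have [|f [lf fx fg]] := @norm_one_extension g lg.
  by move=> x Xx; rewrite -[leRHS]mul1r -g1 dualX_le_dnorm.
have rfg := restr_extension dg fg.
by exists f => //; apply: HBset_of_norm_one => //; rewrite rfg.
Qed.

Lemma norm_preserving_extension g : in_dualX X g ->
  exists f, [/\ in_dualY f, restr X f = g & dnorm setT f = dnorm X g].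
Proof.
move=> dg; have [lg _ _] := dg; have [C gC] := dualX_bounded dg.
have g0 : 0 <= dnorm X g := dnorm_ge0 gC subspace0.
have [f [lf fx fg]] := bounded_extension lg g0 (dualX_le_dnorm dg).
have df : in_dualY f by split => //; exact: bounded_linear_continuous fx.
have rfg := restr_extension dg fg.
exists f; split => //; apply/eqP; rewrite eq_le; apply/andP; split.
  by apply: dnorm_le => // x _ x1; apply: le_trans (fx x) _; rewrite ler_piMr.
by rewrite -rfg dnorm_restr_le.
Qed.

Definition HBrestr_injective : Prop :=
  forall f1 f2, HBset X f1 -> HBset X f2 -> restr X f1 = restr X f2 -> f1 = f2.

Lemma HBset_normalize f : in_dualY f -> 0 < dnorm setT f ->
  dnorm X (restr X f) = dnorm setT f -> HBset X (fun y => (dnorm setT f)^-1 * f y).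
Proof.
move=> df f_gt0 fX; have [C fC] := dualX_bounded (restr_dualX df).
apply: HBset_of_norm_one.
- by move=> k x y; rewrite df.1 mulrDr mulrCA.
- move=> x; rewrite normrM gtr0_norm ?invr_gt0 // ler_pdivrMl //.
  exact: dualY_le_dnorm.
- by rewrite restrZ (dnormZ fC subspace0) ?invr_gt0 // fX mulVf ?gt_eqF.
Qed.

Lemma HBrestr_injective_propU : HBrestr_injective -> propU X.
Proof.
move=> inj g dg; have [f [df rfg fg]] := norm_preserving_extension dg.
exists f; split => // f' [df' rfg' fg'].
have [g0|g_gt0] := eqVneq (dnorm X g) 0.
  apply/funext => x; have := dualY_le_dnorm df x; have := dualY_le_dnorm df' x.
  by rewrite fg fg' g0 !mul0r !normr_le0 => /eqP -> /eqP ->.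
have {}g_gt0 : 0 < dnorm X g.
  by have [C gC] := dualX_bounded dg; rewrite lt_def g_gt0 (dnorm_ge0 gC subspace0).
have hb := HBset_normalize df; have hb' := HBset_normalize df'.
rewrite fg rfg in hb; rewrite fg' rfg' in hb'.
have := inj _ _ (hb g_gt0 erefl) (hb' g_gt0 erefl); rewrite !restrZ rfg rfg' => /(_ erefl) E.
apply/funext => x; apply: (@mulfI _ (dnorm X g)^-1); first by rewrite invr_eq0 gt_eqF.
exact: (congr1 (fun h => h x) E).
Qed.

Lemma propU_HBrestr_injective : propU X -> HBrestr_injective.
Proof.
move=> U f1 f2 [df1 f1_1 f1X] [df2 f2_1 f2X] r12.
have [f0 [_ uniq]] := U _ (restr_dualX df1).
rewrite -(uniq f1); last by split; rewrite ?f1_1 ?f1X.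
by apply: uniq; split; rewrite ?f2_1 ?f2X ?r12.
Qed.

Lemma HBset_value_above f y e : HBrestr_injective -> HBset X f -> 0 < e ->
  exists2 x, X x & f x + `|y - x| < f y + e.
Proof.
move=> inj Hf e0; have [[lf _] _ fX] := Hf; have f_le := HBset_le_norm Hf.
have lf_on : linear_on f by move=> a x z _ _; exact: lf.
apply: contrapT => /forall2NP above.
have {}above x : X x -> f y + e <= f x + `|y - x|.
  by move=> Xx; case: (above x) => // /negP; rewrite -leNgt.
have Xy : ~ X y by move=> Xy; have := above _ Xy; rewrite subrr normr0 addr0; lra.
have [|f' [lf' f'_le f'X f'y]] := norm_one_extension_at (c := f y + e) lf_on (fun x _ => f_le x) Xy.
  move=> x Xx; rewrite above // andbT.
  by have := f_le (y - x); rewrite (linear_functionalB lf) ler_norml => /andP[]; lra.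
have rf' : restr X f' = restr X f.
  by apply/funext => z; rewrite /restr; case: asboolP => // /f'X.
have := inj _ _ (HBset_of_norm_one lf' f'_le _) Hf rf'.
by rewrite rf' fX => /(_ erefl) ff'; move: f'y; rewrite ff'; lra.
Qed.

Lemma HBset_value_below f y e : HBrestr_injective -> HBset X f -> 0 < e ->
  exists2 x, X x & f y - e < f x - `|y - x|.
Proof.
move=> inj Hf e0; have [[lf _] _ _] := Hf.
have [x Xx above] := HBset_value_above (- y) inj Hf e0.
rewrite -opprD normrN (linear_functionalN lf) in above.
exists (- x); first by rewrite -scaleN1r; exact: subspaceZ.
by rewrite opprK (linear_functionalN lf); lra.
Qed.

Lemma restr_ptws_continuous : continuous (restr X : {ptws Y -> R} -> {ptws Y -> R}).
Proof.
move=> f0; apply: (@pointwise_cvgP Y R (restr X @ nbhs f0) (restr X f0) _).2 => y.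
change ((fun g : {ptws Y -> R} => restr X g y) @ nbhs f0 --> restr X f0 y).
have [Xy|Xy] := pselect (X y).
  have -> : (fun g : {ptws Y -> R} => restr X g y) = proj y.
    by apply/funext => g; rewrite restr_in.
  by rewrite restr_in //; exact: (@proj_continuous Y (fun=> R) y f0).
have -> : (fun g : {ptws Y -> R} => restr X g y) = cst 0.
  by apply/funext => g; rewrite restr_out.
by rewrite restr_out //; exact: cvg_cst.
Qed.

Lemma HBset_section : exists G : (Y -> R) -> (Y -> R),
  forall g, SXdual X g -> HBset X (G g) /\ restr X (G g) = g.
Proof.
have [|G HG] := @choice _ _ (fun g f => SXdual X g -> HBset X f /\ restr X f = g).
  move=> g; have [Sg|NSg] := pselect (SXdual X g); last by exists g.
  by have [f Hf rf] := SXdual_restr_HBset Sg; exists f.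
by exists G.
Qed.

Lemma HBset_section_continuous G : HBrestr_injective ->
  (forall g, SXdual X g -> HBset X (G g) /\ restr X (G g) = g) ->
  wstar_cont_on (SXdual X) G.
Proof.
move=> inj HG.
apply: (@subspace_continuousP {ptws Y -> R} (SXdual X) {ptws Y -> R} G).2 => g0 Sg0.
apply: (@pointwise_cvgP Y R (G @ within (SXdual X) (nbhs g0)) (G g0) _).2 => y.
change ((fun g : {ptws Y -> R} => G g y) @ within (SXdual X) (nbhs g0) --> G g0 y).
have [H0 _] := HG _ Sg0.
have Gin g x : SXdual X g -> X x -> G g x = g x.
  by move=> Sg Xx; rewrite -[in RHS](HG _ Sg).2 restr_in.
apply/cvgrPdist_lt => e e0; have e2 : 0 < e / 2 by rewrite divr_gt0.
have [x1 Xx1 above] := HBset_value_above y inj H0 e2.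
have [x2 Xx2 below] := HBset_value_below y inj H0 e2.
have near_at x : \forall g \near (g0 : {ptws Y -> R}), `|g0 x - g x| < e / 2.
  exact: (@cvgr_dist_lt _ _ _ (nbhs g0) _ (fun g : {ptws Y -> R} => g x) (g0 x)
    (@proj_continuous Y (fun=> R) x g0) _ e2).
(* Since [G g] is dominated by the norm, [G g y] lies between
   [g x2 - |y - x2|] and [g x1 + |y - x1|], both close to [G g0 y]. *)
suff squeeze (g : {ptws Y -> R}) : `|g0 x1 - g x1| < e / 2 -> `|g0 x2 - g x2| < e / 2 ->
    SXdual X g -> `|G g0 y - G g y| < e.
  by rewrite near_withinE; exact: (filterS2 _ squeeze (near_at x1) (near_at x2)).
move=> g1 g2 Sg; have [Hg _] := HG _ Sg; have [[lg _] _ _] := Hg.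
have g_le := HBset_le_norm Hg.
move: above below g1 g2 (g_le (y - x1)) (g_le (y - x2)).
rewrite !(linear_functionalB lg) !(Gin _ x1) // !(Gin _ x2) // !ltr_norml !ler_norml.
by move=> ? ? /andP[? ?] /andP[? ?] /andP[? ?] /andP[? ?]; apply/andP; split; lra.
Qed.

End RestrictionToSubspace.

Unset Implicit Arguments.

Theorem proposition1p5 (R : realType) (Y : completeNormedModType R) (X : set Y)
  (HX : is_linear_subspace X) (cX : closed X) :
  [/\ (forall f, HBset X f -> SXdual X (restr X f)),
      (forall g, SXdual X g -> exists2 f, HBset X f & restr X f = g),
      (propU X <->
        (forall f1 f2, HBset X f1 -> HBset X f2 -> restr X f1 = restr X f2 -> f1 = f2))
    & (propU X -> wstar_homeo (HBset X) (SXdual X) (restr X))].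
Proof.
have U_iff : propU X <-> HBrestr_injective X.
  by split; [exact: propU_HBrestr_injective | exact: HBrestr_injective_propU].
split => //; [exact: HBset_restr | exact: SXdual_restr_HBset |].
move=> /U_iff inj; have [G HG] := HBset_section HX.
split.
- split=> [f|f1 f2|g /(SXdual_restr_HBset HX)[f Hf rf]]; first exact: HBset_restr.
    by rewrite !inE; exact: inj.
  by exists f.
- by apply: continuous_subspaceT => f; exact: restr_ptws_continuous.
exists G; split => //; last exact: HBset_section_continuous.
by move=> f Hf; have [HGf rGf] := HG _ (HBset_restr HX Hf); exact: inj.
Qed.
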